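(* Let $k\ge 1$ and $n \ge 3k+1$ be integers, and let $W_n$ be the squared cycle graph on $[n]=\{1,\dots,n\}$. Then every subset $A\subseteq [n]$ with $|A| = 3k-2$ contains an independent set of size $k$ of $W_n$. Consequently, every subset of $[n]$ of cardinality at most $n-3k+2$ is a face of the total cut complex $\Delta_k^t(W_n)$.
   Context: The squared cycle graph $W_n$ is the graph with vertex set $[n]$ and edge set $\{\{i,i+1 \bmod n\},\{i,i+2 \bmod n\} : i=1,\dots,n\}$. An independent set of size $k$ (a $k$-independent set) is a set of $k$ pairwise non-adjacent vertices. For a graph $G=(V,E)$ and $k\ge 1$, the $k$-total cut complex $\Delta_k^t(G)$ is the simplicial complex on $V$ whose facets are the sets $V\setminus S$ where $S$ ranges over independent sets of $G$ of size $k$; equivalently, $\sigma\subseteq V$ is a face iff $V\setminus\sigma$ contains an independent set of size $k$. *)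

From mathcomp Require Import all_boot.
Set Implicit Arguments. Unset Strict Implicit. Unset Printing Implicit Defensive.

(* Vertex set [n] = {1,...,n} is modelled by 'I_n = {0,...,n-1} (shift by one). *)

Definition W_adj (n : nat) : rel 'I_n :=
  fun i j => [|| val j == (val i + 1) %% n, val j == (val i + 2) %% n,
                 val i == (val j + 1) %% n | val i == (val j + 2) %% n].

Definition independent (T : finType) (e : rel T) (S : {set T}) : Prop :=
  forall x y, x \in S -> y \in S -> x != y -> ~~ e x y.

Definition k_independent (T : finType) (e : rel T) (k : nat) (S : {set T}) : Prop :=
  independent e S /\ #|S| = k.

Definition total_cut_face (T : finType) (e : rel T) (k : nat) (sigma : {set T}) : Prop :=
  exists S : {set T}, k_independent e k S /\ sigma \subset ~: S.

From mathcomp Require Import all_boot zify.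
Set Implicit Arguments. Unset Strict Implicit. Unset Printing Implicit Defensive.

(* Two vertices of W_n are non-adjacent iff their cyclic distance lies in
   [3, n - 3].  Induct on k, with n >= 3k + 4 and |A| >= 3k + 1.  If A
   contains three cyclically consecutive vertices, delete them: what remains
   is W_(n-3) with at least 3k - 2 vertices of A, so induction gives k
   independent vertices there, and one of the three deleted vertices is far
   from all of them.  Otherwise rotate so that n - 1 is not in A and let a be
   the least element of A: besides a, at most two elements of A (one of a + 1
   and a + 2, and possibly n - 2) lie outside the window [a + 3, a + n - 3],
   and choosing greedily from left to right in that window gives k vertices
   three apart, to which a is added. *)

Definition cdist (n x y : nat) := if x <= y then y - x else y + n - x.

Definition far (n x y : nat) := 3 <= cdist n x y <= n - 3.

Definition has_k_independent n k (A : {set 'I_n}) :=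
  exists S : {set 'I_n}, S \subset A /\ k_independent (@W_adj n) k S.

Lemma modn_lt2n v n : v < 2 * n -> v %% n = if v < n then v else v - n.
Proof.
move=> lt_v_2n; case: ifP => lt_vn; first by rewrite modn_small.
by rewrite -[in LHS](@subnK n v) ?modnDr ?modn_small; lia.
Qed.

Lemma leq_card_setI_vals n (A P : {set 'I_n}) (l : seq nat) :
  (forall i, i \in A -> i \notin P -> nat_of_ord i \in l) -> #|A| <= #|A :&: P| + size l.
Proof.
move=> AP; rewrite -(cardsID P A) leq_add2l cardE -(size_map (@nat_of_ord n)).
apply: uniq_leq_size; first by rewrite map_inj_uniq ?enum_uniq //; exact: val_inj.
by move=> _ /mapP[i + ->]; rewrite mem_enum inE => /andP[iP iA]; exact: AP.
Qed.

Lemma independent_setU1 (T : finType) (e : rel T) (S : {set T}) z :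
  symmetric e -> independent e S -> {in S, forall y, ~~ e z y} ->
  independent e (z |: S).
Proof.
move=> eC indS zS x y /setU1P[-> | xS] /setU1P[-> | yS] xy.
- by rewrite eqxx in xy.
- exact: zS.
- by rewrite eC zS.
- exact: indS.
Qed.

Section SquaredCycle.

Variable n : nat.
Implicit Types (x y : 'I_n) (A S : {set 'I_n}).

Lemma W_adjC x y : W_adj x y = W_adj y x.
Proof. by rewrite /W_adj orbA orbC -orbA. Qed.

Lemma W_adjE x y : x != y -> W_adj x y = ~~ far n x y.
Proof.
move=> xy; have {}xy : nat_of_ord x != y by [].
have := ltn_ord x; have := ltn_ord y => ltx lty.
rewrite /W_adj /far /cdist /= !modn_lt2n; try lia.
by repeat case: ifP => ?; lia.
Qed.

Definition rot (s : nat) x : 'I_n :=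
  Ordinal (ltn_pmod (x + s) (leq_ltn_trans (leq0n x) (ltn_ord x))).

Lemma rot_inj s : injective (rot s).
Proof.
move=> x y /(congr1 val) /eqP /=; rewrite eqn_modDr !modn_small // => /eqP.
exact: val_inj.
Qed.

Lemma rot0 x : rot 0 x = x.
Proof. by apply: val_inj; rewrite /= addn0 modn_small. Qed.

Lemma rot_eqmod s t x y : x + s = y + t %[mod n] -> rot s x = rot t y.
Proof. by move=> e; apply: val_inj. Qed.

Lemma rotAC s t x : rot s (rot t x) = rot t (rot s x).
Proof. by apply: val_inj; rewrite /= !modnDml addnAC. Qed.

Lemma eq_rot_mod s x y j :
  (val (rot s y) == (val (rot s x) + j) %% n) = (val y == (x + j) %% n).
Proof. by rewrite /= modnDml addnAC eqn_modDr modn_small. Qed.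

Lemma W_adj_rot s x y : W_adj (rot s x) (rot s y) = W_adj x y.
Proof. by rewrite /W_adj !eq_rot_mod. Qed.

Lemma independent_rot s S :
  independent (@W_adj n) S -> independent (@W_adj n) (rot s @: S).
Proof.
move=> indS _ _ /imsetP[x xS ->] /imsetP[y yS ->] xy.
by rewrite W_adj_rot; apply: indS => //; apply: contra xy => /eqP ->.
Qed.

Lemma has_k_independent_rot s k A :
  has_k_independent k (rot s @^-1: A) -> has_k_independent k A.
Proof.
move=> [S [SA [indS cardS]]]; exists (rot s @: S); split; last split.
- by apply/subsetP => _ /imsetP[x xS ->]; have := subsetP SA x xS; rewrite inE.
- exact: independent_rot.
- by rewrite card_imset //; exact: rot_inj.
Qed.

Definition lin_spaced S := {in S &, forall x y, x < y -> x + 3 <= y}.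

Lemma lin_spaced_setU1 S (a : 'I_n) :
  lin_spaced S -> {in S, forall s : 'I_n, a + 3 <= s} -> lin_spaced (a |: S).
Proof.
move=> linS aS x y /setU1P[-> | xS] /setU1P[-> | yS] lt_xy.
- by rewrite ltnn in lt_xy.
- exact: aS.
- by have := aS x xS; lia.
- exact: linS.
Qed.

Lemma exists_lin_spaced k A :
  3 * k - 2 <= #|A| -> exists S, [/\ S \subset A, #|S| = k & lin_spaced S].
Proof.
elim: k A => [|k IH] A cardA.
  by exists set0; split; rewrite ?sub0set ?cards0 // => x y; rewrite inE.
have /card_gt0P[a0 a0A] : 0 < #|A| by lia.
have [a aA amin] := arg_minnP (@nat_of_ord n) a0A.
pose A' := A :&: [set i : 'I_n | a + 3 <= i].
have cardA' : #|A| <= #|A'| + 3.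
  apply: (@leq_card_setI_vals _ _ _ [:: nat_of_ord a; a + 1; a + 2]) => i iA.
  by rewrite !inE; have := amin i iA; lia.
have [S [SA' cardS linS]] := IH A' ltac:(lia).
have aS s : s \in S -> a + 3 <= s.
  by move/(subsetP SA'); rewrite !inE => /andP[].
exists (a |: S); split.
- by rewrite subUset sub1set (subset_trans SA') ?subsetIl ?andbT.
- by rewrite cardsU1 cardS; case: (boolP (a \in S)) => // /aS; lia.
- exact: lin_spaced_setU1.
Qed.

Lemma lin_spaced_independent S :
  lin_spaced S -> {in S &, forall x y, y <= x + (n - 3)} ->
  independent (@W_adj n) S.
Proof.
rewrite /lin_spaced => linS spanS x y xS yS xy; rewrite W_adjE // negbK /far /cdist.
have := spanS x y xS yS; have := spanS y x yS xS.
case: (ltngtP x y) => [lt_xy | lt_yx | /val_inj eq_xy].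
- by have := linS x y xS yS lt_xy; lia.
- by have := linS y x yS xS lt_yx; lia.
- by rewrite eq_xy eqxx in xy.
Qed.

Lemma has_k_independentS_gap k A :
  3 * k + 1 <= #|A| -> (forall i, i \in A -> i < n - 1) ->
  (forall x, x \in A -> rot 1 x \in A -> rot 2 x \notin A) ->
  has_k_independent k.+1 A.
Proof.
move=> cardA ltA notriple.
have /card_gt0P[a0 a0A] : 0 < #|A| by lia.
have [a aA amin] := arg_minnP (@nat_of_ord n) a0A.
have rot_a i j : nat_of_ord i = a + j -> i = rot j a.
  by move=> e; apply: val_inj; rewrite /= -e modn_small.
pose P := [set i : 'I_n | a + 3 <= i <= a + (n - 3)].
pose c := if rot 1 a \in A then a + 1 else a + 2.
have cardAP : #|A| <= #|A :&: P| + 3.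
  apply: (@leq_card_setI_vals _ _ _ [:: nat_of_ord a; c; n - 2]) => i iA.
  have := amin i iA; have := ltA i iA; rewrite !inE /c.
  have a1 : nat_of_ord i = a + 1 -> rot 1 a \in A by move/rot_a <-.
  have a2 : nat_of_ord i = a + 2 -> rot 2 a \in A by move/rot_a <-.
  case: ifP => a1A.
  + by have := notriple a aA a1A; case: (nat_of_ord i =P a + 2) => [/a2 -> //|]; lia.
  + by case: (nat_of_ord i =P a + 1) => [/a1|]; [rewrite a1A | lia].
have [S [SAP cardS linS]] := @exists_lin_spaced k (A :&: P) ltac:(lia).
have SP s : s \in S -> a + 3 <= s <= a + (n - 3).
  by move/(subsetP SAP); rewrite !inE => /andP[].
exists (a |: S); split; last split.
- by rewrite subUset sub1set (subset_trans SAP) ?subsetIl ?andbT.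
- apply: lin_spaced_independent.
    by apply: lin_spaced_setU1 => // s /SP /andP[].
  by move=> x y /setU1P[-> | /SP ?] /setU1P[-> | /SP ?]; lia.
- by rewrite cardsU1 cardS; case: (boolP (a \in S)) => // /SP; lia.
Qed.

End SquaredCycle.

Lemma far_widen n x y : 3 <= n -> far (n - 3) x y -> far n x y.
Proof. by rewrite /far /cdist; case: ifP; lia. Qed.

Definition widen3 n : 'I_(n - 3) -> 'I_n := widen_ord (leq_subr 3 n).
Arguments widen3 : clear implicits.

Lemma widen3_inj n : injective (widen3 n).
Proof. by move=> x y /(congr1 val) eq_xy; apply: val_inj. Qed.

Lemma independent_widen n (S : {set 'I_(n - 3)}) :
  3 <= n -> independent (@W_adj (n - 3)) S ->
  independent (@W_adj n) (widen3 n @: S).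
Proof.
move=> n3 indS _ _ /imsetP[x xS ->] /imsetP[y yS ->] xy.
have xy' : x != y by apply: contra xy => /eqP ->.
rewrite W_adjE // negbK; apply: far_widen n3 _.
by rewrite -[far _ _ _]negbK -W_adjE // indS.
Qed.

(* The new vertex is max(n - 3, M + 3) where M is the largest vertex of S. *)
Lemma independent_widen_top n (S : {set 'I_(n - 3)}) :
  3 * #|S| + 4 <= n -> independent (@W_adj (n - 3)) S ->
  exists2 z : 'I_n, n - 3 <= z &
    independent (@W_adj n) (z |: widen3 n @: S).
Proof.
move=> cardS indS; pose M := \max_(s in S) nat_of_ord s.
have leM s : s \in S -> s <= M by exact: leq_bigmax_cond.
have M_le : M <= n - 4.
  by apply/bigmax_leqP => s _; have := ltn_ord s; lia.
have nearM s : s \in S -> (nat_of_ord s == M) || (M - s <= n - 6).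
  move=> sS; have S_gt0 : 0 < #|S| by apply/card_gt0P; exists s.
  have [t tS Mt] := eq_bigmax_cond (@nat_of_ord (n - 3)) S_gt0.
  rewrite -/M in Mt; rewrite Mt; case: (eqVneq s t) => [-> | st]; first by rewrite eqxx.
  have := indS s t sS tS st; rewrite W_adjE // negbK /far /cdist.
  by have := leM s sS; rewrite Mt; case: ifP; lia.
have ltz : maxn (n - 3) (M + 3) < n by lia.
exists (Ordinal ltz); first by rewrite /= leq_maxl.
apply: independent_setU1 => [||_ /imsetP[s sS ->]]; first exact: W_adjC.
  by apply: independent_widen => //; lia.
have : 0 < #|S| by apply/card_gt0P; exists s.
have := nearM s sS; have := leM s sS; have := ltn_ord s => lts leMs near card_gt0.
rewrite W_adjE; last by rewrite -val_eqE /=; lia.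
by rewrite negbK /far /cdist /=; case: ifP; lia.
Qed.

Lemma has_k_independentS_triple k n (A : {set 'I_n}) :
  (forall B : {set 'I_(n - 3)}, 3 * k - 2 <= #|B| -> has_k_independent k B) ->
  3 * k + 4 <= n -> 3 * k + 1 <= #|A| -> (forall i : 'I_n, n - 3 <= i -> i \in A) ->
  has_k_independent k.+1 A.
Proof.
move=> IH n_big cardA topA; have w_inj := @widen3_inj n.
have cardAw : 3 * k - 2 <= #|widen3 n @^-1: A|.
  suff : #|A :&: [set i : 'I_n | i < n - 3]| <= #|widen3 n @^-1: A|.
    have : #|A| <= #|A :&: [set i : 'I_n | i < n - 3]| + 3.
      apply: (@leq_card_setI_vals _ _ _ [:: n - 3; n - 2; n - 1]) => i _.
      by rewrite !inE; have := ltn_ord i; lia.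
    lia.
  rewrite -(card_imset _ w_inj); apply: subset_leq_card.
  apply/subsetP => i; rewrite !inE => /andP[iA lti]; apply/imsetP.
  have wi : widen3 n (Ordinal lti) = i by apply: val_inj.
  by exists (Ordinal lti); rewrite ?inE wi.
have [S [Sw [indS cardS]]] := IH _ cardAw.
have [z ltz indzS] := independent_widen_top (S := S) ltac:(rewrite cardS; lia) indS.
exists (z |: widen3 n @: S); split; last split => //.
- rewrite subUset sub1set topA //=.
  by apply/subsetP => _ /imsetP[s sS ->]; have := subsetP Sw s sS; rewrite inE.
- rewrite cardsU1 card_imset // cardS; case: (boolP (z \in _)) => //.
  by case/imsetP => s _ /(congr1 val) /=; have := ltn_ord s; lia.
Qed.

Lemma has_k_independent_of_card k n (A : {set 'I_n}) :
  3 * k + 1 <= n -> 3 * k - 2 <= #|A| -> has_k_independent k A.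
Proof.
elim: k n A => [|k IH] n A n_big cardA.
  by exists set0; split; [exact: sub0set | split=> [x y|]; rewrite ?inE ?cards0].
have cardAr s : #|rot s @^-1: A| = #|A| by rewrite card_preimset //; exact: rot_inj.
case: (boolP [exists x, [&& x \in A, rot 1 x \in A & rot 2 x \in A]]).
- case/existsP => x /and3P[x0 x1 x2].
  apply: (has_k_independent_rot (s := x + 3)).
  apply: has_k_independentS_triple; rewrite ?cardAr.
  + by move=> B cardB; apply: IH => //; lia.
  + lia.
  + lia.
  move=> i le_i; rewrite inE (rot_eqmod (t := i + 3 - n) (y := x)); last first.
    by rewrite -[in RHS](modnDr _ n); congr (_ %% n); have := ltn_ord i; lia.
  have : i + 3 - n < 3 by have := ltn_ord i; lia.
  by case: (i + 3 - n) => [|[|[|]]] //; rewrite rot0.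
- move/existsPn => notriple.
  have [b bA] : exists b, b \notin A.
    have n_gt0 : 0 < n by lia.
    have := notriple (Ordinal n_gt0); rewrite !negb_and.
    by case/or3P => ?; eexists; eassumption.
  apply: (has_k_independent_rot (s := b + 1)).
  apply: has_k_independentS_gap; rewrite ?cardAr.
  + lia.
  + move=> i; rewrite inE; case: (ltnP i (n - 1)) => // le_i.
    rewrite (rot_eqmod (t := 0) (y := b)) ?rot0 ?(negbTE bA) //.
    by rewrite -[in RHS](modnDr _ n); congr (_ %% n); have := ltn_ord i; lia.
  + move=> x; rewrite !inE !(rotAC (b + 1)) => xA x1A.
    by have := notriple (rot (b + 1) x); rewrite xA x1A.
Qed.

Theorem lemma3p1 (k n : nat) (hk : 1 <= k) (hn : 3 * k + 1 <= n) :
  (forall A : {set 'I_n}, #|A| = 3 * k - 2 ->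
     exists S : {set 'I_n}, S \subset A /\ k_independent (@W_adj n) k S)
  /\
  (forall sigma : {set 'I_n}, #|sigma| <= n - (3 * k) + 2 ->
     total_cut_face (@W_adj n) k sigma).
Proof.
split=> [A cardA | sigma card_sigma].
  by apply: has_k_independent_of_card => //; rewrite cardA.
have [|S [S_sigmaC indS]] := @has_k_independent_of_card k n (~: sigma) hn.
  by have := cardsC sigma; rewrite card_ord; lia.
by exists S; split; rewrite // subsetC.
Qed.
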